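(* Let $\Gamma$, $\varepsilon$, $q$, $E$, $\{e_i:i\in I\}$, $p$, $\pi$ and $R$ be as follows: $\varepsilon$ is a commutation factor on the abelian group $\Gamma$ which can be written as $\varepsilon(\alpha,\beta)=(-1)^{\pi(\alpha)\pi(\beta)}\sigma(\alpha,\beta)/\sigma(\beta,\alpha)$ for some map $\sigma:\Gamma\times\Gamma\to\mathbb{C}\setminus\{0\}$; $E$ is a finite-dimensional $\Gamma$-graded complex vector space with homogeneous basis $\{e_i\}_{i\in I}$, $I$ totally ordered, $\deg e_i=p(i)$; and $R$ is the color Hecke $R$-matrix $$R(e_i\otimes e_j)=\begin{cases} q^{1-2\pi(p(i))}\varepsilon(p(i),p(i))\, e_i\otimes e_i, & i=j,\\ (q-q^{-1})e_i\otimes e_j+\varepsilon(p(i),p(j))\,e_j\otimes e_i, & i<j,\\ \varepsilon(p(i),p(j))\,e_j\otimes e_i,& i>j.\end{cases}$$ Let $\bar R$ be the super (i.e. $\mathbb{Z}_2$-graded) Hecke $R$-matrix on the same space with the $\mathbb{Z}_2$-grading $\delta=\pi\circ p$: $$\bar R(e_i\otimes e_j)=\begin{cases} (-1)^{\delta(i)}q^{1-2\delta(i)}\, e_i\otimes e_i, & i=j,\\ (q-q^{-1})e_i\otimes e_j+(-1)^{\delta(i)\delta(j)}e_j\otimes e_i, & i<j,\\ (-1)^{\delta(i)\delta(j)}e_j\otimes e_i,& i>j,\end{cases}$$ and let $F:E\otimes E\to E\otimes E$ be the invertible diagonal map $F(e_i\otimes e_j)=\sigma(p(i),p(j))\,e_i\otimes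 e_j$. Then $R=F^{-1}\circ\bar R\circ F$; that is, the color Hecke $R$-matrix is obtained from the $\mathbb{Z}_2$-graded Hecke $R$-matrix by the twist determined by $\sigma$ (equivalently, by tensoring with the color exchange operator $\rho_\alpha\otimes\rho_\beta\mapsto \frac{\sigma(\alpha,\beta)}{\sigma(\beta,\alpha)}\rho_\beta\otimes\rho_\alpha$ on the degree-tracking factors).
   Context: A commutation factor on $\Gamma$ is a map $\varepsilon:\Gamma\times\Gamma\to\mathbb{C}\setminus\{0\}$ with $\varepsilon(\alpha,\beta)\varepsilon(\beta,\alpha)=1$ and $\varepsilon(\alpha+\beta,\gamma)=\varepsilon(\alpha,\gamma)\varepsilon(\beta,\gamma)$. $\pi:\Gamma\to\{0,1\}$ is defined by $\pi(\alpha)=0$ if $\varepsilon(\alpha,\alpha)=1$ and $\pi(\alpha)=1$ if $\varepsilon(\alpha,\alpha)=-1$; $\Gamma_0=\pi^{-1}(0)$ is a subgroup of index at most 2 and $\pi$ is the quotient map $\Gamma\to\Gamma/\Gamma_0\subseteq\mathbb{Z}_2$. $q\in\mathbb{C}\setminus\{0\}$. *)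

From HB Require Import structures.
From mathcomp Require Import all_boot all_order all_algebra.
From mathcomp Require Import complex.
From mathcomp Require Import reals.
Set Implicit Arguments. Unset Strict Implicit. Unset Printing Implicit Defensive.
Import Order.TTheory GRing.Theory Num.Theory.
Local Open Scope ring_scope.

Definition commutation_factor (Gamma : zmodType) (K : fieldType)
  (eps : Gamma -> Gamma -> K) : Prop :=
  (forall a b, eps a b != 0) /\
  (forall a b, eps a b * eps b a = 1) /\
  (forall a b c, eps (a + b) c = eps a c * eps b c).

Definition cpi (Gamma : zmodType) (K : fieldType)
  (eps : Gamma -> Gamma -> K) (a : Gamma) : nat :=
  if eps a a == 1 then 0%N else 1%N.

(* Linear endomorphisms of E (x) E, E having homogeneous basis (e_i)_{i in I},
   are encoded by the images of the basis vectors e_i (x) e_j, each image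
   given by its coordinate vector on the basis (e_k (x) e_l)_{(k,l)}:
   A (i,j) (k,l) = coefficient of e_k (x) e_l in A (e_i (x) e_j). *)
Definition tlin (I : finType) (K : fieldType) := I * I -> I * I -> K.

(* Composition A o B. *)
Definition tcomp (I : finType) (K : fieldType) (A B : tlin I K) : tlin I K :=
  fun ij kl => \sum_(m : I * I) B ij m * A m kl.

Definition kron (I : finType) (K : fieldType) (x y : I * I) : K :=
  (x == y)%:R.
Arguments kron {I K}.

Section Rmats.
Variables (disp : Order.disp_t) (I : finOrderType disp) (K : fieldType).
Variables (Gamma : zmodType) (eps : Gamma -> Gamma -> K) (q : K) (p : I -> Gamma).

Definition colorR : tlin I K := fun ij kl =>
  let i := ij.1 in let j := ij.2 in
  if i == j then
    q ^ (1 - 2 * (cpi eps (p i))%:Z) * eps (p i) (p i) * kron (i, i) kl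
  else if (i < j)%O then
    (q - q^-1) * kron (i, j) kl + eps (p i) (p j) * kron (j, i) kl
  else eps (p i) (p j) * kron (j, i) kl.

Definition superR : tlin I K := fun ij kl =>
  let i := ij.1 in let j := ij.2 in
  let di := cpi eps (p i) in let dj := cpi eps (p j) in
  if i == j then
    (-1) ^+ di * q ^ (1 - 2 * di%:Z) * kron (i, i) kl
  else if (i < j)%O then
    (q - q^-1) * kron (i, j) kl + (-1) ^+ (di * dj) * kron (j, i) kl
  else (-1) ^+ (di * dj) * kron (j, i) kl.

Definition twistF (sigma : Gamma -> Gamma -> K) : tlin I K := fun ij kl =>
  sigma (p ij.1) (p ij.2) * kron ij kl.

End Rmats.

Definition tid (I : finType) (K : fieldType) : tlin I K := fun ij kl => kron ij kl.
Arguments tid {I K}.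
Definition tinverse (I : finType) (K : fieldType) (A G : tlin I K) : Prop :=
  tcomp G A = tid /\ tcomp A G = tid.

From mathcomp Require Import all_boot all_order all_algebra.
From mathcomp Require Import complex.
From mathcomp Require Import reals.
From Stdlib Require Import FunctionalExtensionality.
Set Implicit Arguments. Unset Strict Implicit. Unset Printing Implicit Defensive.
Import Order.TTheory GRing.Theory Num.Theory.
Local Open Scope ring_scope.
Local Open Scope complex_scope.

(** The twist [F] is diagonal, so conjugating by it rescales the coefficient of
    [e_k (x) e_l] in the image of [e_i (x) e_j] by [s(i,j) / s(k,l)], with
    [s(i,j) = sigma(p i, p j)].  Every entry of the super R-matrix is a multiple
    of [e_i (x) e_j] or of [e_j (x) e_i]; the first kind is unchanged, the second
    is multiplied by [sigma(p i, p j) / sigma(p j, p i)], which together with the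
    sign [(-1)^(pi(p i) pi(p j))] is exactly [eps(p i, p j)] by the factorization
    hypothesis. *)

Section DiagonalMaps.
Variables (I : finType) (K : fieldType).

Definition tdiag (d : I * I -> K) : tlin I K := fun ij kl => d ij * kron ij kl.

Lemma sum_kronl (f : I * I -> K) (x : I * I) :
  \sum_(m : I * I) kron x m * f m = f x.
Proof.
rewrite (bigD1 x) //= big1 => [|m hm]; last by rewrite /kron eq_sym (negbTE hm) mul0r.
by rewrite /kron eqxx mul1r addr0.
Qed.

Lemma sum_kronr (f : I * I -> K) (y : I * I) :
  \sum_(m : I * I) f m * kron m y = f y.
Proof. by under eq_bigr do rewrite mulrC /kron eq_sym; rewrite sum_kronl. Qed.

Lemma tcomp_tdiagr (A : tlin I K) (d : I * I -> K) ij kl :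
  tcomp A (tdiag d) ij kl = d ij * A ij kl.
Proof.
by rewrite /tcomp /tdiag; under eq_bigr do rewrite -mulrA; rewrite -mulr_sumr sum_kronl.
Qed.

Lemma tcomp_tdiagl (A : tlin I K) (d : I * I -> K) ij kl :
  tcomp (tdiag d) A ij kl = A ij kl * d kl.
Proof. by rewrite /tcomp /tdiag; under eq_bigr do rewrite mulrA; rewrite sum_kronr. Qed.

Lemma tinverse_tdiag (d : I * I -> K) (G : tlin I K) :
  (forall x, d x != 0) -> tinverse (tdiag d) G -> G = tdiag (fun x => (d x)^-1).
Proof.
move=> d_neq0 [_ dG]; apply: functional_extensionality => ij.
apply: functional_extensionality => kl.
have := congr1 (fun A => A ij kl) dG; rewrite /= tcomp_tdiagl /tid /tdiag /kron.
case: (eqVneq ij kl) => [<- <- | _ /eqP]; first by rewrite mulrC mulfK.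
by rewrite /= mulr0 mulf_eq0 (negbTE (d_neq0 _)) orbF => /eqP.
Qed.

Lemma tconj_tdiag (A : tlin I K) (d : I * I -> K) (G : tlin I K) ij kl :
  (forall x, d x != 0) -> tinverse (tdiag d) G ->
  tcomp G (tcomp A (tdiag d)) ij kl = d ij * A ij kl / d kl.
Proof. by move=> d_neq0 dG; rewrite (tinverse_tdiag d_neq0 dG) tcomp_tdiagl tcomp_tdiagr. Qed.

Lemma tconj_kron (d : I * I -> K) (c : K) ij x kl :
  d ij * (c * kron x kl) / d kl = d ij * c / d x * kron x kl.
Proof. by rewrite /kron; case: (eqVneq x kl) => [-> | _]; rewrite /= ?mulr1 ?mulr0 ?mul0r. Qed.

End DiagonalMaps.

Section ColorFromSuper.
Variables (disp : Order.disp_t) (I : finOrderType disp) (K : fieldType).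
Variables (Gamma : zmodType) (eps sigma : Gamma -> Gamma -> K) (q : K) (p : I -> Gamma).
Hypothesis sigma_neq0 : forall a b, sigma a b != 0.
Hypothesis eps_sigma : forall a b,
  eps a b = (-1) ^+ (cpi eps a * cpi eps b) * sigma a b / sigma b a.

Local Notation s ij := (sigma (p ij.1) (p ij.2)).

Lemma twistF_tdiag : twistF p sigma = tdiag (fun ij => s ij).
Proof. by []. Qed.

Lemma eps_diag a : eps a a = (-1) ^+ cpi eps a.
Proof. by rewrite eps_sigma mulfK // /cpi; case: (_ == 1). Qed.

Lemma colorR_conj_entry ij kl : colorR eps q p ij kl = s ij * superR eps q p ij kl / s kl.
Proof.
case: ij => i j; rewrite /colorR /superR /=; case: (eqVneq i j) => [<- | _].
  rewrite (tconj_kron (fun x => s x) _ (i, i)) [sigma _ _ * _]mulrC mulfK //.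
  by rewrite eps_diag [_ * q ^ _]mulrC.
case: ifP => _; rewrite ?mulrDr ?[(_ + _) / _]mulrDl !(tconj_kron (fun x => s x) _ (i, j)) /=.
  by rewrite [sigma _ _ * (q - _)]mulrC mulfK // eps_sigma [sigma _ _ * _]mulrC.
by rewrite eps_sigma [sigma _ _ * _]mulrC.
Qed.

Lemma colorR_twist_superR (Finv : tlin I K) :
  tinverse (twistF p sigma) Finv ->
  colorR eps q p = tcomp Finv (tcomp (superR eps q p) (twistF p sigma)).
Proof.
rewrite twistF_tdiag => Finv_inv.
apply: functional_extensionality => ij; apply: functional_extensionality => kl.
by rewrite tconj_tdiag // colorR_conj_entry.
Qed.

End ColorFromSuper.

Theorem mainTheorem4 (R : realType) (Gamma : zmodType)
  (eps : Gamma -> Gamma -> R[i]) (sigma : Gamma -> Gamma -> R[i])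
  (q : R[i]) (disp : Order.disp_t) (I : finOrderType disp) (p : I -> Gamma) :
  commutation_factor eps ->
  (forall a b, sigma a b != 0) ->
  (forall a b, eps a b =
     (-1) ^+ (cpi eps a * cpi eps b) * sigma a b / sigma b a) ->
  q != 0 ->
  forall Finv : tlin I R[i], tinverse (twistF p sigma) Finv ->
  colorR eps q p = tcomp Finv (tcomp (superR eps q p) (twistF p sigma)).
Proof. by move=> _ sigma_neq0 eps_sigma _; apply: colorR_twist_superR. Qed.
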